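(* Let $m, n_0, n_1$ be positive integers and $n(\lambda) = n_0 + n_1\lambda$. Suppose nonzero polynomials $x(\lambda), y(\lambda), z(\lambda) \in \mathbb{Q}[\lambda]$ satisfy $$\frac{m}{n(\lambda)} = \frac{1}{x(\lambda)} + \frac{1}{y(\lambda)} + \frac{1}{z(\lambda)}$$ identically, where $z(\lambda) = z_0 + z_1\lambda$ with $z_1 \neq 0$, and both $x$ and $y$ have degree larger than $1$. Then $z_1 = n_1/m$.
   Context: $\lambda$ is an indeterminate; the equation is an identity of rational functions in $\lambda$. *)

From mathcomp Require Import all_boot all_order all_algebra.
From mathcomp Require Import fraction.
Set Implicit Arguments. Unset Strict Implicit. Unset Printing Implicit Defensive.
Import GRing.Theory.
Local Open Scope ring_scope.

Notation ratfun := {fraction {poly rat}}.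
Definition rf (p : {poly rat}) : ratfun := @FracField.tofrac _ p.

From mathcomp Require Import all_boot all_order all_algebra.
From mathcomp Require Import fraction.
From mathcomp Require Import ring zify.
Set Implicit Arguments. Unset Strict Implicit. Unset Printing Implicit Defensive.
Import GRing.Theory Num.Theory.
Local Open Scope ring_scope.

(* Clearing denominators turns the identity into (m z - n) x y = n z (x + y).
   If m z1 <> n1, then m z - n has degree exactly 1, so the left side has
   degree deg x + deg y + 1, while the right side has degree at most
   2 + max (deg x) (deg y); this is impossible once deg x, deg y > 1. *)

Local Notation "x %:F" := (@FracField.tofrac _ x).

Lemma size_linear_poly (R : nzRingType) (a b : R) :
  b != 0 -> size (a%:P + b *: 'X) = 2%N.
Proof.
move=> b_neq0; rewrite addrC -mul_polyC size_MXaddC polyC_eq0 (negbTE b_neq0).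
by rewrite size_polyC b_neq0.
Qed.

Lemma polyC_mul_linearB (R : comNzRingType) (c a b a' b' : R) :
  c%:P * (a%:P + b *: 'X) - (a'%:P + b' *: 'X)
    = (c * a - a')%:P + (c * b - b') *: 'X.
Proof. by rewrite -!mul_polyC !polyCB !polyCM; ring. Qed.

Lemma egyptian3_clear_denominators (F : fieldType) (a n x y z : F) :
  n != 0 -> x != 0 -> y != 0 -> z != 0 ->
  a / n = x^-1 + y^-1 + z^-1 -> (a * z - n) * (x * y) = n * z * (x + y).
Proof.
move=> n0 x0 y0 z0 E; rewrite -[a](divfK n0) E; field.
by rewrite x0 y0 z0.
Qed.

Lemma egyptian3_clear_denominators_tofrac (R : idomainType) (a n x y z : R) :
  n != 0 -> x != 0 -> y != 0 -> z != 0 ->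
  a%:F / n%:F = (x%:F)^-1 + (y%:F)^-1 + (z%:F)^-1 ->
  (a * z - n) * (x * y) = n * z * (x + y).
Proof.
move=> n0 x0 y0 z0 E; apply/eqP; rewrite -tofrac_eq; apply/eqP.
rewrite !rmorphM rmorphB !rmorphD rmorphM /=.
by apply: egyptian3_clear_denominators; rewrite ?tofrac_eq0.
Qed.

Lemma linear_mul_neq_quadratic_mulD (R : idomainType) (L N Z x y : {poly R}) :
  size L = 2%N -> (size N <= 2)%N -> (size Z <= 2)%N ->
  (1 < (size x).-1)%N -> (1 < (size y).-1)%N ->
  L * (x * y) != N * Z * (x + y).
Proof.
move=> sL sN sZ sx sy.
have [x0 y0 L0] : [/\ x != 0, y != 0 & L != 0].
  by split; rewrite -size_poly_eq0; lia.
apply/eqP => E.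
have := size_polyMleq (N * Z) (x + y).
rewrite -E size_mul ?mulf_neq0 // size_mul // sL.
have := size_polyMleq N Z; have := size_polyD x y.
lia.
Qed.

Theorem lemma3 (m n0 n1 : nat) (x y : {poly rat}) (z0 z1 : rat) :
  (0 < m)%N -> (0 < n0)%N -> (0 < n1)%N ->
  x != 0 -> y != 0 -> z1 != 0 ->
  (1 < (size x).-1)%N -> (1 < (size y).-1)%N ->
  rf (m%:R%:P) / rf (n0%:R%:P + n1%:R *: 'X)
    = (rf x)^-1 + (rf y)^-1 + (rf (z0%:P + z1 *: 'X))^-1 ->
  z1 = n1%:R / m%:R.
Proof.
move=> m_gt0 _ n1_gt0 x0 y0 z1_neq0 sx sy E.
have m_neq0 : (m%:R : rat) != 0 by rewrite pnatr_eq0 -lt0n.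
have n1_neq0 : (n1%:R : rat) != 0 by rewrite pnatr_eq0 -lt0n.
have sN := size_linear_poly n0%:R n1_neq0.
have sZ := size_linear_poly z0 z1_neq0.
have := egyptian3_clear_denominators_tofrac _ x0 y0 _ E.
rewrite -!size_poly_eq0 sN sZ polyC_mul_linearB => /(_ isT isT) cleared.
apply/eqP; apply: contraT => z1_neq.
have c_neq0 : (m%:R * z1 - n1%:R : rat) != 0.
  by apply: contra z1_neq; rewrite subr_eq0 => /eqP <-; rewrite [_ * z1]mulrC mulfK.
have := linear_mul_neq_quadratic_mulD (size_linear_poly (m%:R * z0 - n0%:R) c_neq0)
  (eq_leq sN) (eq_leq sZ) sx sy.
by rewrite cleared eqxx.
Qed.
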